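(* $(\mathcal{K}(X),\overline{\mathbb{F}})$, with the Hausdorff metric, is strongly (cofinitely) sensitive if and only if $(X,\mathbb{F})$ is strongly (cofinitely) sensitive.
   Context: $(X,d)$ compact metric, $\mathbb{F}=(f_n)$ continuous self-maps, $\omega_n=f_n\circ\cdots\circ f_1$. Strongly (cofinitely) sensitive: there is $\delta>0$ such that for every $x$ and every neighborhood $U$ of $x$ there is $K$ with $\mathrm{diam}(\omega_n(U))>\delta$ for all $n\ge K$. $\mathcal{K}(X)$: non-empty compact subsets with the Hausdorff metric $d_H$; induced system $\overline{\omega}_n(A)=\omega_n(A)$, notion defined analogously using $d_H$. *)

From Stdlib Require Import Reals List ClassicalEpsilon.
Open Scope R_scope.

(** Supremum of a set of reals (the least upper bound when it exists;
    an arbitrary real otherwise -- all sets below are nonempty and bounded). *)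
Definition Rsup (E : R -> Prop) : R :=
  epsilon (inhabits 0%R) (fun l => is_lub E l).

Definition Rinf (E : R -> Prop) : R := - Rsup (fun r => E (- r)).

Section Metric.
Context {T : Type} (d : T -> T -> R).

Definition is_metric : Prop :=
  (forall x y, 0 <= d x y) /\
  (forall x y, d x y = 0 <-> x = y) /\
  (forall x y, d x y = d y x) /\
  (forall x y z, d x z <= d x y + d y z).

Definition open_set (V : T -> Prop) : Prop :=
  forall x, V x -> exists r, 0 < r /\ forall y, d x y < r -> V y.

Definition compact_subset (A : T -> Prop) : Prop :=
  forall (I : Type) (U : I -> T -> Prop),
    (forall i, open_set (U i)) ->
    (forall x, A x -> exists i, U i x) ->
    exists l : list I, forall x, A x -> exists i, In i l /\ U i x.

Definition compact_space : Prop := compact_subset (fun _ => True).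

Definition continuous_map (g : T -> T) : Prop :=
  forall x eps, 0 < eps -> exists del, 0 < del /\
    forall y, d x y < del -> d (g x) (g y) < eps.

Definition diam (S : T -> Prop) : R :=
  Rsup (fun r => exists x y, S x /\ S y /\ r = d x y).

Definition nbhd_in (S : T -> Prop) (x : T) (U : T -> Prop) : Prop :=
  exists r, 0 < r /\ forall y, S y -> d x y < r -> U y.

End Metric.

Definition image {T : Type} (g : T -> T) (A : T -> Prop) : T -> Prop :=
  fun y => exists x, A x /\ y = g x.

(** omega f n = f_n o ... o f_1 (omega f 0 = id; f 0 is unused, the
    sequence is indexed from 1 as in the paper). *)
Fixpoint omega {T : Type} (f : nat -> T -> T) (n : nat) : T -> T :=
  match n with
  | O => fun x => x
  | S m => fun x => f (S m) (omega f m x)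
  end.

Definition strongly_sensitive {T : Type} (S : T -> Prop) (d : T -> T -> R)
  (f : nat -> T -> T) : Prop :=
  exists delta, 0 < delta /\
    forall x U, S x -> nbhd_in d S x U ->
      exists K : nat, forall n, (K <= n)%nat ->
        diam d (fun y => S y /\ image (omega f n) U y) > delta.

Definition point_set_dist {X : Type} (d : X -> X -> R) (a : X) (B : X -> Prop) : R :=
  Rinf (fun r => exists b, B b /\ r = d a b).

Definition hausdorff_dist {X : Type} (d : X -> X -> R) (A B : X -> Prop) : R :=
  Rmax (Rsup (fun r => exists a, A a /\ r = point_set_dist d a B))
       (Rsup (fun r => exists b, B b /\ r = point_set_dist d b A)).

Definition in_KX {X : Type} (d : X -> X -> R) (A : X -> Prop) : Prop :=
  (exists a, A a) /\ compact_subset d A.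

Definition induced {X : Type} (f : nat -> X -> X) : nat -> (X -> Prop) -> (X -> Prop) :=
  fun n A => image (f n) A.

From Stdlib Require Import Reals Lra Lia List Classical FunctionalExtensionality
  PropExtensionality ClassicalEpsilon.
Open Scope R_scope.

(* A compact metric space is bounded, so all the suprema involved are well defined.

   If K(X) is sensitive with constant delta, use it at the singleton {x} and the
   neighbourhood of compact sets contained in the r-ball around x: two image sets at
   Hausdorff distance > delta contain image points at distance > delta, and these are
   images of points of the r-ball.

   Conversely, let X be sensitive with constant delta and A compact.  Cover A by finitely
   many r/4-balls; from some time n on, the image of every ball has diameter > delta, so
   every ball contains a point whose image is more than delta/2 away from the image q of a
   fixed a0 in A.  The finite set D2 of these points and D1 = D2 + {a0} are both within
   Hausdorff distance r/2 of A, while q witnesses that their images are at Hausdorff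
   distance >= delta/2.  Hence K(X) is sensitive with constant delta/4. *)

Lemma Rsup_is_lub (E : R -> Prop) :
  (exists x, E x) -> (exists M, forall x, E x -> x <= M) -> is_lub E (Rsup E).
Proof.
  intros Hne [M HM]. unfold Rsup. apply epsilon_spec.
  destruct (completeness E) as [m Hm]; [exists M; exact HM | exact Hne |].
  exists m; exact Hm.
Qed.

Lemma Rsup_upper (E : R -> Prop) x M :
  E x -> (forall y, E y -> y <= M) -> x <= Rsup E.
Proof. intros Hx HM. destruct (Rsup_is_lub E) as [Hub _]; eauto. Qed.

Lemma Rsup_least (E : R -> Prop) M :
  (exists x, E x) -> (forall y, E y -> y <= M) -> Rsup E <= M.
Proof. intros Hne HM. destruct (Rsup_is_lub E) as [_ Hleast]; eauto. Qed.

Lemma Rinf_lower (E : R -> Prop) x m :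
  E x -> (forall y, E y -> m <= y) -> Rinf E <= x.
Proof.
  intros Hx Hm. unfold Rinf.
  enough (-x <= Rsup (fun r => E (- r))) by lra.
  apply Rsup_upper with (M := - m).
  - rewrite Ropp_involutive; exact Hx.
  - intros y Hy. specialize (Hm _ Hy). lra.
Qed.

Lemma Rinf_greatest (E : R -> Prop) m :
  (exists x, E x) -> (forall y, E y -> m <= y) -> m <= Rinf E.
Proof.
  intros [x Hx] Hm. unfold Rinf.
  enough (Rsup (fun r => E (- r)) <= - m) by lra.
  apply Rsup_least.
  - exists (- x). rewrite Ropp_involutive; exact Hx.
  - intros y Hy. specialize (Hm _ Hy). lra.
Qed.

Lemma diam_gt_intro {T : Type} (dist : T -> T -> R) M (S : T -> Prop) r :
  (forall x y, S x -> S y -> dist x y <= M) ->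
  (exists x y, S x /\ S y /\ r < dist x y) -> r < diam dist S.
Proof.
  intros dist_bounded (x & y & Sx & Sy & Hr). unfold diam.
  enough (dist x y <= Rsup (fun s => exists x y, S x /\ S y /\ s = dist x y)) by lra.
  apply Rsup_upper with (M := M); [eauto |].
  intros s (a & b & Sa & Sb & ->). apply dist_bounded; assumption.
Qed.

Lemma diam_gt_elim {T : Type} (dist : T -> T -> R) (S : T -> Prop) r :
  (exists x, S x) -> r < diam dist S -> exists x y, S x /\ S y /\ r < dist x y.
Proof.
  intros [x0 Sx0] Hr. apply NNPP. intros Hnone.
  enough (diam dist S <= r) by lra.
  apply Rsup_least; [exists (dist x0 x0); eauto |].
  intros s (a & b & Sa & Sb & ->). apply Rnot_lt_le. intros Hlt. eauto 6.
Qed.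

Lemma compact_subset_of_list {T : Type} (dist : T -> T -> R) (A : T -> Prop) s :
  (forall x, A x -> In x s) -> compact_subset dist A.
Proof.
  revert A. induction s as [|a s IH]; intros A HA I U Uopen Hcover.
  - exists nil. intros x Hx. destruct (HA x Hx).
  - destruct (IH (fun y => A y /\ y <> a)) with (U := U) as [l Hl]; auto.
    + intros x [Hx Hne]. destruct (HA x Hx); [congruence | assumption].
    + intros x [Hx _]. auto.
    + destruct (classic (A a)) as [Ha | Ha].
      * destruct (Hcover a Ha) as [i Hi]. exists (i :: l). intros x Hx.
        destruct (classic (x = a)) as [-> | Hne].
        -- exists i; simpl; auto.
        -- destruct (Hl x (conj Hx Hne)) as [j [Hj Uj]]. exists j; simpl; auto.
      * exists l. intros x Hx. apply Hl. split; [exact Hx |]. intros ->; auto.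
Qed.

Lemma list_upper_bound {T : Type} (g : T -> R) (l : list T) :
  exists M, forall x, In x l -> g x <= M.
Proof.
  induction l as [|a l [M HM]].
  - exists 0. intros x [].
  - exists (Rmax (g a) M). intros x [-> | Hx].
    + apply Rmax_l.
    + eapply Rle_trans; [apply HM, Hx | apply Rmax_r].
Qed.

Lemma eventually_forall_in_list {I : Type} (P : I -> nat -> Prop) (l : list I) :
  (forall i, exists K, forall n, (K <= n)%nat -> P i n) ->
  exists K, forall i, In i l -> forall n, (K <= n)%nat -> P i n.
Proof.
  intros Hev. induction l as [|a l [K IH]].
  - exists O. intros i [].
  - destruct (Hev a) as [Ka Ha]. exists (Nat.max Ka K). intros i [-> | Hi] n Hn.
    + apply Ha. lia.
    + apply IH; [exact Hi | lia].
Qed.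

Lemma list_choice {I T : Type} (P : I -> T -> Prop) (l : list I) :
  (forall i, In i l -> exists y, P i y) ->
  exists ly, (forall i, In i l -> exists y, In y ly /\ P i y) /\
             (forall y, In y ly -> exists i, In i l /\ P i y).
Proof.
  induction l as [|a l IH]; intros Hex.
  - exists nil. split; intros _ [].
  - destruct (Hex a (or_introl eq_refl)) as [ya Ha].
    destruct IH as [ly [Hcov Hsrc]]; [intros i Hi; apply Hex; right; exact Hi |].
    exists (ya :: ly). split.
    + intros i [-> | Hi]; [exists ya; simpl; auto |].
      destruct (Hcov i Hi) as [y [Hy Py]]. exists y; simpl; auto.
    + intros y [<- | Hy]; [exists a; simpl; auto |].
      destruct (Hsrc y Hy) as [i [Hi Pi]]. exists i; simpl; auto.
Qed.

Lemma omega_induced {X : Type} (f : nat -> X -> X) n (B : X -> Prop) :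
  omega (induced f) n B = image (omega f n) B.
Proof.
  induction n as [|n IH]; simpl; [| rewrite IH; unfold induced];
    apply functional_extensionality; intros y; apply propositional_extensionality;
    unfold image; split.
  - intros Hy. exists y; auto.
  - intros [x [Hx ->]]; exact Hx.
  - intros [x [[z [Hz ->]] ->]]. eauto.
  - intros [z [Hz ->]]. eauto.
Qed.

Section Metric.
Variables (X : Type) (d : X -> X -> R).
Hypothesis d_nonneg : forall x y, 0 <= d x y.
Hypothesis d_refl : forall x, d x x = 0.
Hypothesis d_sym : forall x y, d x y = d y x.
Hypothesis d_triangle : forall x y z, d x z <= d x y + d y z.

Lemma open_ball c r : open_set d (fun y => d c y < r).
Proof.
  intros y Hy. exists (r - d c y). split; [lra |].
  intros z Hz. specialize (d_triangle c y z). lra.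
Qed.

Lemma compact_finite_net (A : X -> Prop) r :
  compact_subset d A -> 0 < r ->
  exists cs, (forall c, In c cs -> A c) /\
             (forall a, A a -> exists c, In c cs /\ d c a < r).
Proof.
  intros Acomp rpos.
  destruct (Acomp {a : X | A a} (fun c y => d (proj1_sig c) y < r)) as [l Hl].
  - intros c. apply open_ball.
  - intros x Ax. exists (exist _ x Ax). simpl. rewrite d_refl. exact rpos.
  - exists (map (@proj1_sig _ _) l). split.
    + intros c Hc. apply in_map_iff in Hc as [[x Ax] [<- _]]. exact Ax.
    + intros a Ha. destruct (Hl a Ha) as [c [Hc Hca]].
      exists (proj1_sig c). split; [apply in_map, Hc | exact Hca].
Qed.

Lemma compact_space_bounded : compact_space d -> exists M, forall x y, d x y <= M.
Proof.
  intros Hcomp.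
  destruct (compact_finite_net (fun _ => True) 1 Hcomp) as [cs [_ Hnet]]; [lra |].
  destruct (list_upper_bound (fun p => d (fst p) (snd p)) (list_prod cs cs)) as [M HM].
  exists (M + 2). intros x y.
  destruct (Hnet x I) as [a [Ha Hax]]. destruct (Hnet y I) as [b [Hb Hby]].
  specialize (HM (a, b) (in_prod _ _ _ _ Ha Hb)). simpl in HM.
  pose proof (d_triangle x a y). pose proof (d_triangle a b y).
  rewrite (d_sym x a) in *. lra.
Qed.

Lemma in_KX_of_list (A : X -> Prop) a s :
  A a -> (forall x, A x -> In x s) -> in_KX d A.
Proof. intros Ha Hs. split; [exists a; exact Ha | exact (compact_subset_of_list d A s Hs)]. Qed.

Lemma point_set_dist_le a (B : X -> Prop) b : B b -> point_set_dist d a B <= d a b.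
Proof.
  intros Hb. apply Rinf_lower with (m := 0); [eauto |].
  intros y (c & _ & ->). apply d_nonneg.
Qed.

Lemma point_set_dist_ge a (B : X -> Prop) m :
  (exists b, B b) -> (forall b, B b -> m <= d a b) -> m <= point_set_dist d a B.
Proof.
  intros [b Hb] Hm. apply Rinf_greatest; [eauto |].
  intros y (c & Hc & ->). auto.
Qed.

Lemma hausdorff_dist_le_of_close (A B : X -> Prop) r :
  (exists a, A a) -> (exists b, B b) ->
  (forall a, A a -> exists b, B b /\ d a b <= r) ->
  (forall b, B b -> exists a, A a /\ d b a <= r) ->
  hausdorff_dist d A B <= r.
Proof.
  intros [a0 Ha0] [b0 Hb0] HA HB. apply Rmax_lub; apply Rsup_least; eauto.
  - intros s (a & Ha & ->). destruct (HA a Ha) as [b [Hb Hab]].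
    eapply Rle_trans; [apply point_set_dist_le, Hb | exact Hab].
  - intros s (b & Hb & ->). destruct (HB b Hb) as [a [Ha Hba]].
    eapply Rle_trans; [apply point_set_dist_le, Ha | exact Hba].
Qed.

Lemma hausdorff_dist_gt_far_pair (A B : X -> Prop) r :
  (exists a, A a) -> (exists b, B b) -> r < hausdorff_dist d A B ->
  exists a b, A a /\ B b /\ r < d a b.
Proof.
  intros [a0 Ha0] [b0 Hb0] Hr. apply NNPP. intros Hnone.
  assert (Hclose : forall a b, A a -> B b -> d a b <= r).
  { intros a b Ha Hb. apply Rnot_lt_le. intros Hlt. eauto 6. }
  enough (hausdorff_dist d A B <= r) by lra.
  apply hausdorff_dist_le_of_close; eauto.
  intros b Hb. exists a0. rewrite d_sym. auto.
Qed.

Lemma in_KX_image_list (g : X -> X) a l : In a l -> in_KX d (image g (fun y => In y l)).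
Proof.
  intros Ha. apply in_KX_of_list with (g a) (map g l); [exists a; auto |].
  intros z [w [Hw ->]]. apply in_map, Hw.
Qed.

Lemma diam_gt_far_point (S : X -> Prop) r q :
  (exists x, S x) -> r < diam d S -> exists y, S y /\ r / 2 < d y q.
Proof.
  intros Hne Hr.
  destruct (diam_gt_elim d S r Hne Hr) as (x & y & Sx & Sy & Hxy).
  pose proof (d_triangle x q y). rewrite (d_sym q y) in *.
  destruct (Rlt_or_le (r / 2) (d x q)); [exists x | exists y]; split; auto; lra.
Qed.

Lemma far_sample (g : X -> X) (cs : list X) r delta q :
  0 < r ->
  (forall c, In c cs -> delta < diam d (fun y => True /\ image g (fun y => d c y < r) y)) ->
  exists ly, (forall c, In c cs -> exists y, In y ly /\ d c y < r) /\
             (forall y, In y ly -> (exists c, In c cs /\ d c y < r) /\ delta / 2 < d q (g y)).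
Proof.
  intros rpos Hdiam.
  destruct (list_choice (fun c y => d c y < r /\ delta / 2 < d q (g y)) cs)
    as [ly [Hcover Hsrc]].
  - intros c Hc.
    destruct (diam_gt_far_point (fun y => True /\ image g (fun y => d c y < r) y) delta q)
      as [z [[_ [y [Hy ->]]] Hfar]]; [| exact (Hdiam c Hc) |].
    + exists (g c). split; [exact I | exists c; split; [| reflexivity]].
      rewrite d_refl. exact rpos.
    + exists y. rewrite (d_sym q). split; [exact Hy | exact Hfar].
  - exists ly. split.
    + intros c Hc. destruct (Hcover c Hc) as [y [Hy [Hcy _]]]. eauto.
    + intros y Hy. destruct (Hsrc y Hy) as [c [Hc [Hcy Hfar]]]. eauto.
Qed.

Variable M : R.
Hypothesis d_bounded : forall x y, d x y <= M.

Lemma point_set_dist_le_hausdorff_l (A B : X -> Prop) a :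
  (exists b, B b) -> A a -> point_set_dist d a B <= hausdorff_dist d A B.
Proof.
  intros [b Hb] Ha. eapply Rle_trans; [| apply Rmax_l].
  apply Rsup_upper with (M := M); [eauto |].
  intros s (c & _ & ->). eapply Rle_trans; [apply point_set_dist_le, Hb | apply d_bounded].
Qed.

Lemma point_set_dist_le_hausdorff_r (A B : X -> Prop) b :
  (exists a, A a) -> B b -> point_set_dist d b A <= hausdorff_dist d A B.
Proof.
  intros [a Ha] Hb. eapply Rle_trans; [| apply Rmax_r].
  apply Rsup_upper with (M := M); [eauto |].
  intros s (c & _ & ->). eapply Rle_trans; [apply point_set_dist_le, Ha | apply d_bounded].
Qed.

Lemma hausdorff_dist_bounded (A B : X -> Prop) :
  in_KX d A -> in_KX d B -> hausdorff_dist d A B <= M.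
Proof.
  intros [[a Ha] _] [[b Hb] _].
  apply hausdorff_dist_le_of_close; eauto.
Qed.

Lemma sensitive_of_hyperspace_sensitive (f : nat -> X -> X) :
  strongly_sensitive (in_KX d) (hausdorff_dist d) (induced f) ->
  strongly_sensitive (fun _ => True) d f.
Proof.
  intros [delta [delta_pos Hsens]]. exists delta. split; [exact delta_pos |].
  intros x U _ [r [rpos HU]].
  set (point := fun z => In z (x :: nil)).
  set (in_ball := fun B : X -> Prop => forall b, B b -> d x b < r).
  assert (Hnbhd : nbhd_in (hausdorff_dist d) (in_KX d) point in_ball).
  { exists r. split; [exact rpos |]. intros B [Bne _] Hlt b Hb.
    assert (d b x <= point_set_dist d b point).
    { apply point_set_dist_ge; [exists x; left; reflexivity | intros z [<- | []]; lra]. }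
    pose proof (point_set_dist_le_hausdorff_r point B b (ex_intro _ x (or_introl eq_refl)) Hb).
    rewrite d_sym. lra. }
  assert (Hpoint : in_KX d point).
  { apply in_KX_of_list with x (x :: nil); [left; reflexivity | intros z Hz; exact Hz]. }
  destruct (Hsens point in_ball Hpoint Hnbhd) as [K HK]. exists K. intros n Hn.
  specialize (HK n Hn).
  apply diam_gt_elim in HK as (P & Q & [HP [B1 [HB1 ->]]] & [HQ [B2 [HB2 ->]]] & HPQ);
    [| exists (omega (induced f) n point)].
  2:{ rewrite omega_induced. split; [apply in_KX_image_list with x; left; reflexivity |].
      exists point. split; [| symmetry; apply omega_induced].
      intros b [<- | []]. rewrite d_refl. exact rpos. }
  rewrite !omega_induced in *.
  destruct HP as [HP _], HQ as [HQ _].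
  destruct (hausdorff_dist_gt_far_pair _ _ _ HP HQ HPQ)
    as (p & q & [b1 [Hb1 ->]] & [b2 [Hb2 ->]] & Hpq).
  apply diam_gt_intro with M; [intros; apply d_bounded |].
  exists (omega f n b1), (omega f n b2).
  split; [| split]; [split; [exact I | exists b1; auto] | split; [exact I | exists b2; auto] |].
  exact Hpq.
Qed.

Lemma hyperspace_spread (g : X -> X) (A : X -> Prop) a0 cs r delta :
  0 < r -> A a0 -> (forall c, In c cs -> A c) ->
  (forall a, A a -> exists c, In c cs /\ d c a < r) ->
  (forall c, In c cs -> delta < diam d (fun y => True /\ image g (fun y => d c y < r) y)) ->
  exists ly, (exists y0, In y0 ly) /\
    hausdorff_dist d A (fun y => In y (a0 :: ly)) <= 2 * r /\
    hausdorff_dist d A (fun y => In y ly) <= 2 * r /\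
    delta / 2 <= hausdorff_dist d (image g (fun y => In y (a0 :: ly)))
                                  (image g (fun y => In y ly)).
Proof.
  intros rpos Ha0 Hcs Hnet Hdiam.
  destruct (far_sample g cs r delta (g a0) rpos Hdiam) as [ly [Hcover Hsrc]].
  destruct (Hnet a0 Ha0) as [c0 [Hc0 _]].
  destruct (Hcover c0 Hc0) as [y0 [Hy0 _]].
  assert (Hclose : forall D : X -> Prop, (forall y, In y ly -> D y) ->
            (forall y, D y -> y = a0 \/ In y ly) -> hausdorff_dist d A D <= 2 * r).
  { intros D Hly_D HD_ly.
    apply hausdorff_dist_le_of_close; [eauto | eauto | |].
    - intros a Ha. destruct (Hnet a Ha) as [c [Hc Hca]].
      destruct (Hcover c Hc) as [y [Hy Hcy]].
      exists y. split; [auto |]. pose proof (d_triangle a c y). rewrite (d_sym a c) in *. lra.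
    - intros y Hy. destruct (HD_ly y Hy) as [-> | Hy'].
      + exists a0. rewrite d_refl. split; [exact Ha0 | lra].
      + destruct (Hsrc y Hy') as [[c [Hc Hcy]] _].
        exists c. rewrite d_sym. split; [auto | lra]. }
  exists ly. split; [eauto |]. split; [| split].
  - apply Hclose; [right; assumption | intros y [<- | Hy]; auto].
  - apply Hclose; auto.
  - eapply Rle_trans; [| apply point_set_dist_le_hausdorff_l with (a := g a0)].
    + apply point_set_dist_ge; [exists (g y0), y0; auto |].
      intros z [y [Hy ->]]. apply Rlt_le, (proj2 (Hsrc y Hy)).
    + exists (g y0), y0; auto.
    + exists a0. split; [left |]; reflexivity.
Qed.

Lemma hyperspace_sensitive_of_sensitive (f : nat -> X -> X) :
  strongly_sensitive (fun _ => True) d f ->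
  strongly_sensitive (in_KX d) (hausdorff_dist d) (induced f).
Proof.
  intros [delta [delta_pos Hsens]]. exists (delta / 4). split; [lra |].
  intros A U [[a0 Ha0] Acomp] [r [rpos HU]].
  destruct (compact_finite_net A (r / 4) Acomp) as [cs [Hcs Hnet]]; [lra |].
  destruct (eventually_forall_in_list (fun c n =>
      delta < diam d (fun y => True /\ image (omega f n) (fun y => d c y < r / 4) y)) cs)
    as [K HK].
  { intros c. apply (Hsens c); [exact I |]. exists (r / 4). split; [lra | auto]. }
  exists K. intros n Hn.
  destruct (hyperspace_spread (omega f n) A a0 cs (r / 4) delta)
    as (ly & [y0 Hy0] & HA1 & HA2 & Hfar); auto; [lra |].
  apply diam_gt_intro with M.
  { intros P Q [HP _] [HQ _]. apply hausdorff_dist_bounded; assumption. }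
  exists (image (omega f n) (fun y => In y (a0 :: ly))), (image (omega f n) (fun y => In y ly)).
  split; [| split; [| lra]]; (split; [eapply in_KX_image_list; simpl; eauto |]).
  - exists (fun y => In y (a0 :: ly)). split; [| symmetry; apply omega_induced].
    apply HU; [| lra]. apply in_KX_of_list with a0 (a0 :: ly); [left |]; auto.
  - exists (fun y => In y ly). split; [| symmetry; apply omega_induced].
    apply HU; [| lra]. apply in_KX_of_list with y0 ly; auto.
Qed.

End Metric.

Theorem mainTheorem9 (X : Type) (d : X -> X -> R) (f : nat -> X -> X) :
  is_metric d -> compact_space d -> (forall n, continuous_map d (f n)) ->
  (strongly_sensitive (in_KX d) (hausdorff_dist d) (induced f)
   <-> strongly_sensitive (fun _ : X => True) d f).
Proof.
  intros (d_nonneg & d_zero & d_sym & d_triangle) Hcomp _.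
  assert (d_refl : forall x, d x x = 0) by (intros x; apply d_zero; reflexivity).
  destruct (compact_space_bounded X d d_refl d_sym d_triangle Hcomp) as [M d_bounded].
  split.
  - apply sensitive_of_hyperspace_sensitive with M; assumption.
  - apply hyperspace_sensitive_of_sensitive with M; assumption.
Qed.
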